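(* Let $d\ge 1$ and $n\ge d+2$, and let $\mathcal{F}$, $B_i$ be as in the context. The number of indices $i\in[m]$ with $|B_i|=d$ is at most $\binom{n-1}{d}$. Moreover, equality holds if and only if $\{F_i: i\in[m],\ |B_i|=d\}$ is a star of maximum size, i.e. equals $\{F\in\binom{[n]}{d+1}: a\in F\}$ for some $a\in[n]$.
   Context: Let $\mathcal{F}=\{F_1,\dots,F_m\}\subseteq\binom{[n]}{d+1}$ consist of distinct sets and have VC-dimension at most $d$ (no $(d+1)$-set $S$ is shattered, i.e. no $S$ such that every $A\subseteq S$ equals $F\cap S$ for some $F\in\mathcal{F}$). For $i\in[m]$, call $B\subsetneq F_i$ admissible for $F_i$ if $F\cap F_i\neq B$ for every $F\in\mathcal{F}$ (admissible sets exist by the VC-dimension assumption). For each $i$, $B_i$ is a fixed admissible set for $F_i$ of maximum cardinality among all admissible sets for $F_i$. *)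

From mathcomp Require Import all_boot.
Set Implicit Arguments. Unset Strict Implicit. Unset Printing Implicit Defensive.

(* Ground set [n] is 'I_n; the family F_1..F_m is an indexed family
   F : 'I_m -> {set 'I_n}. *)

Definition shattered (n m : nat) (F : 'I_m -> {set 'I_n}) (S : {set 'I_n}) : Prop :=
  forall A : {set 'I_n}, A \subset S -> exists j : 'I_m, F j :&: S = A.

Definition VCdim_le (n m : nat) (F : 'I_m -> {set 'I_n}) (d : nat) : Prop :=
  forall S : {set 'I_n}, #|S| = d.+1 -> ~ shattered F S.

Definition admissible (n m : nat) (F : 'I_m -> {set 'I_n}) (i : 'I_m)
  (B : {set 'I_n}) : Prop :=
  B \proper F i /\ forall j : 'I_m, F j :&: F i <> B.

From mathcomp Require Import all_boot.

Set Implicit Arguments.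
Unset Strict Implicit.
Unset Printing Implicit Defensive.

(* Call i full when |B_i| = d, i.e. B_i = F_i \ {x} for a single x.  A full B_i
   is contained in no other F_j: otherwise it would be a proper subset of the
   trace F_j ∩ F_i, which then has d+1 elements and forces F_j = F_i.  Hence
   (i, y) |-> (F_i \ {y}, y) if y ∈ F_i, and (B_i, y) otherwise, injects
   {full i} × [n] into the n·C(n-1, d) pairs (T, y) with |T| = d, y ∉ T.
   In case of equality this map is onto, so every d-subset of a full F_j can be
   re-completed by a new point to a full F_k; such exchanges keep the missing
   point a of B_j missing from B_k, and walking from F_j to any (d+1)-set
   containing a shows that the full sets form the star at a. *)

Definition pointed_dsets (T : finType) (k : nat) :=
  [set q : {set T} * T | (#|q.1| == k) && (q.2 \notin q.1)].

Definition star (T : finType) (a : T) (k : nat) :=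
  [set S : {set T} | (#|S| == k.+1) && (a \in S)].

Lemma card_pointed_dsets (T : finType) k :
  #|pointed_dsets T k| = #|T| * 'C(#|T|.-1, k).
Proof.
rewrite mul_bin_down -sum1_card.
transitivity (\sum_(A : {set T} | #|A| == k) \sum_(y : T | y \notin A) 1).
  by rewrite pair_big_dep; apply: eq_bigl => q; rewrite inE.
rewrite (eq_bigr (fun _ => #|T| - k)); last first.
  move=> A /eqP Ak; rewrite -(cardsC A) Ak addKn -sum1_card.
  by apply: eq_bigl => y; rewrite inE.
rewrite (eq_bigl [in [set A : {set T} | #|A| == k]]) => [|A]; last by rewrite inE.
by rewrite sum_nat_const card_draws mulnC.
Qed.

Lemma card_star (T : finType) (a : T) k : #|star a k| = 'C(#|T|.-1, k).
Proof.
have notin_avoid (A : {set T}) : A \subset [set~ a] -> a \notin A.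
  by move=> sA; apply/negP => /(subsetP sA); rewrite !inE eqxx.
have -> : star a k =
    (fun A => a |: A) @: [set A : {set T} | A \subset [set~ a] & #|A| == k].
  apply/setP => S; rewrite inE; apply/idP/imsetP.
  - case/andP => /eqP Sk aS; exists (S :\ a); last by rewrite setD1K.
    rewrite inE subsetDr ?sub1set ?inE ?eqxx //=.
    by move: Sk; rewrite (cardsD1 a) aS add1n => -[->].
  - case=> A; rewrite inE => /andP[sA /eqP Ak] ->.
    by rewrite cardsU1 notin_avoid // Ak setU11 eqxx.
rewrite card_in_imset ?cards_draws ?cardsC1 // => A1 A2.
rewrite !inE => /andP[s1 _] /andP[s2 _] eqA.
by rewrite -(setU1K (notin_avoid _ s1)) -(setU1K (notin_avoid _ s2)) eqA.
Qed.

Section FullAdmissible.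

Variables (d n m : nat) (F B : 'I_m -> {set 'I_n}).
Hypotheses (F_inj : injective F) (card_F : forall i, #|F i| = d.+1)
  (B_adm : forall i, admissible F i (B i)).

Definition full := [set i : 'I_m | #|B i| == d].

Lemma admissible_subset i : B i \subset F i.
Proof. by have [/andP[]] := B_adm i. Qed.

Lemma exists_notin_admissible i : exists2 x, x \in F i & x \notin B i.
Proof. by have [/properP[_ [x ? ?]] _] := B_adm i; exists x. Qed.

Lemma card_F_setD1 i y : y \in F i -> #|F i :\ y| = d.
Proof. by move=> yF; move: (card_F i); rewrite (cardsD1 y) yF => -[]. Qed.

Lemma full_subset_uniq i j : i \in full -> B i \subset F j -> j = i.
Proof.
rewrite inE => /eqP Bd sBFj.
have sB_trace : B i \subset F j :&: F i by rewrite subsetI sBFj admissible_subset.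
have [trace_eq | trace_neq] := eqVneq (F j :&: F i) (B i).
  by case: (proj2 (B_adm i) j trace_eq).
have : #|B i| < #|F j :&: F i| by rewrite proper_card // properEneq eq_sym trace_neq.
rewrite Bd => card_trace.
have /eqP trace_Fi : F j :&: F i == F i by rewrite eqEcard subsetIr card_F.
apply: F_inj; apply/eqP; rewrite eq_sym eqEcard !card_F leqnn andbT.
by rewrite -trace_Fi subsetIl.
Qed.

Lemma full_setD1 i x : i \in full -> x \in F i -> x \notin B i -> B i = F i :\ x.
Proof.
rewrite inE => /eqP Bd xF xB; apply/eqP; rewrite eqEcard card_F_setD1 // Bd leqnn.
rewrite andbT; apply/subsetP => u uB; rewrite !inE (subsetP (admissible_subset i)) //.
by rewrite andbT; apply: contraNneq xB => <-.
Qed.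

Definition encode (p : 'I_m * 'I_n) :=
  if p.2 \in F p.1 then (F p.1 :\ p.2, p.2) else (B p.1, p.2).

Lemma encode_inj : {in setX full setT &, injective encode}.
Proof.
move=> [i y] [j y'] /setXP[iI _] /setXP[jI _]; rewrite /encode /=.
case: ifP => yFi; case: ifP => y'Fj [eq1 eq2]; subst y'.
- by rewrite (F_inj (_ : F i = F j)) // -(setD1K yFi) -(setD1K y'Fj) eq1.
- have /(full_subset_uniq jI) ji : B j \subset F i by rewrite -eq1 subsetDl.
  by subst j; rewrite yFi in y'Fj.
- have /(full_subset_uniq iI) ij : B i \subset F j by rewrite eq1 subsetDl.
  by subst j; rewrite yFi in y'Fj.
- by rewrite (full_subset_uniq iI (_ : B i \subset F j)) // eq1 admissible_subset.
Qed.

Lemma encode_subset : encode @: setX full setT \subset pointed_dsets 'I_n d.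
Proof.
apply/subsetP => _ /imsetP[[i y] /setXP[iI _] ->]; rewrite /encode /= inE.
case: ifP => yFi /=; first by rewrite card_F_setD1 // eqxx setD11.
by move: iI; rewrite inE => ->; apply: contraFN yFi; apply/subsetP/admissible_subset.
Qed.

Lemma card_full_mul : #|full| * n <= n * 'C(n.-1, d).
Proof.
have -> : #|full| * n = #|setX full [set: 'I_n]| by rewrite cardsX cardsT card_ord.
have := card_pointed_dsets 'I_n d; rewrite card_ord => <-.
rewrite -(card_in_imset encode_inj).
exact: subset_leq_card encode_subset.
Qed.

Section Extremal.

Hypothesis card_full : #|full| = 'C(n.-1, d).

Lemma encode_onto : encode @: setX full setT = pointed_dsets 'I_n d.
Proof.
apply/eqP; rewrite eqEcard encode_subset card_pointed_dsets card_ord.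
by rewrite (card_in_imset encode_inj) cardsX cardsT card_ord card_full mulnC leqnn.
Qed.

Lemma full_exchange j y z : j \in full -> y \in B j -> z \notin F j ->
  exists2 k, k \in full & F k = z |: (F j :\ y).
Proof.
move=> jI yB zF; have yF := subsetP (admissible_subset j) _ yB.
have : (F j :\ y, z) \in pointed_dsets 'I_n d.
  by rewrite inE card_F_setD1 // eqxx !inE negb_and zF orbT.
rewrite -encode_onto => /imsetP[[k z'] /setXP[kI _]]; rewrite /encode /=.
case: ifP => zFk [eqk eqz]; subst z'; exists k => //; first by rewrite eqk setD1K.
have /(full_subset_uniq kI) kj : B k \subset F j by rewrite -eqk subsetDl.
by subst k; rewrite -eqk !inE eqxx in yB.
Qed.

(* If a ∈ B_k, the point x missing from B_k lies in F_j \ {a, y}; exchanging x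
   instead of y yields a full F_l containing B_k, so l = k, yet y ∈ F_l \ F_k. *)
Lemma full_exchange_notin j a y z k :
  j \in full -> a \in F j -> a \notin B j -> y \in F j -> y != a ->
  z \notin F j -> k \in full -> F k = z |: (F j :\ y) -> a \notin B k.
Proof.
move=> jI aF aB yF ya zF kI Fk; apply/negP => aBk.
have Bj := full_setD1 jI aF aB.
have [x xFk xBk] := exists_notin_admissible k.
have Bk := full_setD1 kI xFk xBk.
have xz : x != z.
  apply/eqP => xz; subst x.
  have /(full_subset_uniq kI) jk : B k \subset F j.
    by rewrite Bk Fk setU1K ?subsetDl // !inE negb_and zF orbT.
  by rewrite jk xFk in zF.
have xa : x != a by apply: contraNneq xBk => ->.
have /andP[xy xFj] : (x != y) && (x \in F j) by move: xFk; rewrite Fk !inE (negbTE xz).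
have xBj : x \in B j by rewrite Bj !inE xa.
have [l lI Fl] := full_exchange jI xBj zF.
have /(full_subset_uniq kI) lk : B k \subset F l.
  by apply/subsetP => u; rewrite Bk Fk Fl !inE; case: (u == z) => //= /and3P[-> _ ->].
have : y \in F l by rewrite Fl !inE yF andbT (eq_sym y x) xy orbT.
by rewrite lk Fk !inE eqxx orbF => /eqP yz; rewrite -yz yF in zF.
Qed.

Lemma star_subset_full j a S : j \in full -> a \in F j -> a \notin B j ->
  S \in star a d -> exists2 l, l \in full & F l = S.
Proof.
move=> + + + /[!inE] /andP[/eqP Sd aS].
move Sk: #|S :\: F j| => k.
elim: k j Sk => [|k IH] j Sk jI aF aB.
  exists j => //; apply/eqP; rewrite eq_sym eqEcard card_F Sd leqnn andbT.
  by rewrite -setD_eq0 -cards_eq0 Sk.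
have [z /setDP[zS zF]] : exists z, z \in S :\: F j by apply/set0Pn; rewrite -card_gt0 Sk.
have [y /setDP[yF yS]] : exists y, y \in F j :\: S.
  apply/set0Pn/negP; rewrite setD_eq0 => sFS.
  have /eqP FS : F j == S by rewrite eqEcard sFS card_F Sd leqnn.
  by move: Sk; rewrite FS setDv cards0.
have ya : y != a by apply: contraNneq yS => ->.
have yBj : y \in B j by rewrite (full_setD1 jI aF aB) !inE ya.
have [l lI Fl] := full_exchange jI yBj zF.
apply: (IH l) => //; last exact: full_exchange_notin Fl.
- have -> : S :\: F l = (S :\: F j) :\ z.
    apply/setP => w; rewrite Fl !inE; have [-> | _] /= := eqVneq w z; first by [].
    by have [-> | _] := eqVneq w y; rewrite ?(negbTE yS) ?andbF.
  by move: Sk; rewrite (cardsD1 z) !inE zS zF => -[].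
- by rewrite Fl !inE aF (eq_sym a y) ya orbT.
Qed.

End Extremal.

End FullAdmissible.

Theorem claim4p2 (d n m : nat) (F : 'I_m -> {set 'I_n}) (B : 'I_m -> {set 'I_n}) :
  1 <= d -> d + 2 <= n ->
  injective F ->
  (forall i, #|F i| = d.+1) ->
  VCdim_le F d ->
  (forall i, admissible F i (B i)) ->
  (forall i (B' : {set 'I_n}), admissible F i B' -> #|B'| <= #|B i|) ->
  #|[set i : 'I_m | #|B i| == d]| <= 'C(n.-1, d) /\
  (#|[set i : 'I_m | #|B i| == d]| = 'C(n.-1, d) <->
   exists a : 'I_n,
     [set F i | i in [set i : 'I_m | #|B i| == d]] =
     [set S : {set 'I_n} | (#|S| == d.+1) && (a \in S)]).
Proof.
move=> _ dn F_inj card_F _ B_adm _.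
have n_gt0 : 0 < n by rewrite (leq_trans _ dn) // addn2.
have card_star_n (a : 'I_n) : #|star a d| = 'C(n.-1, d) by rewrite card_star card_ord.
split; first by have := card_full_mul F_inj card_F B_adm; rewrite mulnC leq_pmul2l.
split=> [card_full | [a full_star]]; last first.
  by rewrite -(card_star_n a) /star -full_star card_imset.
have [j jI] : exists j, j \in full d B.
  by apply/card_gt0P; rewrite card_full bin_gt0 -ltnS prednK // (leq_trans _ dn) // addn2.
have [a aF aB] := exists_notin_admissible B_adm j.
exists a; apply/eqP.
rewrite eq_sym eqEcard card_star_n card_imset // card_full leqnn andbT.
apply/subsetP => S /(star_subset_full F_inj card_F B_adm card_full jI aF aB) [l lI <-].
exact: imset_f.
Qed.
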